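(* Let $X$ be a real Hilbert space with inner product $\langle\cdot,\cdot\rangle_X$, let $E\colon X\to\mathbb R$ be a twice differentiable convex energy, and let $P\colon\mathbb R^p\to X$, $\theta\mapsto u_\theta$, be a differentiable parametrization. Set $L(\theta)\coloneqq E(u_\theta)$, let $\nabla L(\theta)\in\mathbb R^p$ be its Euclidean gradient, define the energy Gram matrix $G_E(\theta)\in\mathbb R^{p\times p}$ by $G_E(\theta)_{ij}\coloneqq D^2E(u_\theta)(\partial_{\theta_i}u_\theta,\partial_{\theta_j}u_\theta)$, and define the energy natural gradient $\nabla^E L(\theta)\coloneqq G_E(\theta)^+\nabla L(\theta)$. Let $T_\theta\mathcal F_\Theta\coloneqq\operatorname{span}\{\partial_{\theta_i}u_\theta : i=1,\dots,p\}\subseteq X$ and let $DP_\theta\colon\mathbb R^p\to X$ denote the derivative of $P$ at $\theta$. (i) If $D^2E(u)$ is coercive for every $u\in X$, then $$DP_\theta\nabla^EL(\theta) = \Pi_{T_\theta \mathcal F_\Theta}^{D^2E(u_\theta)}\big(D^2E(u_\theta)^{-1} \nabla E(u_\theta)\big),$$ where $D^2E(u_\theta)$ is identified (via the Riesz representation) with an operator $X\to X$, $\nabla E(u_\theta)\in X$ is the gradient of $E$ with respect to $\langle\cdot,\cdot\rangle_X$, and $\Pi_{T_\theta \mathcal F_\Theta}^{D^2E(u_\theta)}$ denotes the orthogonal projection onto $T_\theta\mathcal F_\Theta$ with respect to the inner product $(v,w)\mapsto D^2E(u_\theta)(v,w)$. (ii) If $E$ is a quadratic function whose second derivative $D^2E=a$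 is a bounded, positive definite symmetric bilinear form on $X$, and $E$ admits a minimizer $u^*\in X$, then $$DP_\theta\nabla^EL(\theta) = \Pi_{T_\theta \mathcal F_\Theta}^{a}( u_\theta - u^* ),$$ where $\Pi_{T_\theta \mathcal F_\Theta}^{a}$ denotes the orthogonal projection onto $T_\theta\mathcal F_\Theta$ with respect to the inner product $a$.
   Context: For a matrix $A$, $A^+$ denotes any pseudo-inverse of $A$ (a generalized inverse, i.e. a matrix with $AA^+A=A$). For a finite-dimensional subspace $V$ of a vector space with inner product $b$, the projection $\Pi^b_V(x)$ is the unique element of $V$ with $b(\Pi^b_V(x),z)=b(x,z)$ for all $z\in V$. *)

From HB Require Import structures.
From mathcomp Require Import all_boot all_order all_algebra.
From mathcomp Require Import all_classical all_reals all_analysis.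
Set Implicit Arguments. Unset Strict Implicit. Unset Printing Implicit Defensive.
Import Order.TTheory GRing.Theory Num.Theory.
Import numFieldNormedType.Exports.
Local Open Scope ring_scope.

Section Defs.
Context {R : realType} {X : normedModType R}.

(* ip is an inner product on X inducing the norm of X (so a complete X is a
   real Hilbert space). Linearity in the second argument follows by symmetry. *)
Definition is_inner_product (ip : X -> X -> R) : Prop :=
  [/\ forall x y, ip x y = ip y x,
      forall (c : R) x y z, ip (c *: x + y) z = c * ip x z + ip y z
    & forall x, ip x x = `|x| ^+ 2].

Definition is_bilin_form (a : X -> X -> R) : Prop :=
  (forall (c : R) x y z, a (c *: x + y) z = c * a x z + a y z) /\
  (forall (c : R) x y z, a x (c *: y + z) = c * a x y + a x z).

Definition symm_form (a : X -> X -> R) : Prop := forall x y, a x y = a y x.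

Definition bounded_form (a : X -> X -> R) : Prop :=
  exists C : R, forall x y, `|a x y| <= C * `|x| * `|y|.

Definition posdef_form (a : X -> X -> R) : Prop := forall x, x != 0 -> 0 < a x x.

Definition coercive_form (a : X -> X -> R) : Prop :=
  exists c : R, 0 < c /\ forall x, c * `|x| ^+ 2 <= a x x.

Definition convex_fun (E : X -> R) : Prop :=
  forall u v (t : R), 0 <= t <= 1 ->
    E ((1 - t) *: u + t *: v) <= (1 - t) * E u + t * E v.

Definition is_gradient (ip : X -> X -> R) (E : X -> R) (g : X -> X) : Prop :=
  forall u, differentiable E u /\ forall v, 'd E u v = ip (g u) v.

(* D^2E(u)(v,w) = D(DE)(u)(v)(w) = <Dg(u) v, w>, where g is the gradient of E;
   'd g u is the Riesz-identified operator D^2E(u) : X -> X. *)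
Definition hessian (ip : X -> X -> R) (g : X -> X) (u : X) : X -> X -> R :=
  fun v w => ip ('d g u v) w.

Definition quadratic_with (E : X -> R) (a : X -> X -> R) : Prop :=
  exists (l : X -> R) (c0 : R),
    [/\ forall (c : R) x y, l (c *: x + y) = c * l x + l y,
        continuous l
      & forall u, E u = a u u / 2 + l u + c0].

Definition is_projection (b : X -> X -> R) (V : set X) (x y : X) : Prop :=
  V y /\ forall z, V z -> b y z = b x z.

Context {p : nat}.

Definition partial_param (P : 'cV[R]_p -> X) (th : 'cV[R]_p) (i : 'I_p) : X :=
  'd P th (delta_mx i 0).

Definition tangent_space (P : 'cV[R]_p -> X) (th : 'cV[R]_p) : set X :=
  [set x | exists c : 'cV[R]_p, x = \sum_i c i 0 *: partial_param P th i].

Definition euclid_grad (L : 'cV[R]_p -> R) (th : 'cV[R]_p) : 'cV[R]_p :=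
  \col_i 'd L th (delta_mx i 0).

Definition energy_gram (ip : X -> X -> R) (g : X -> X) (P : 'cV[R]_p -> X)
    (th : 'cV[R]_p) : 'M[R]_p :=
  \matrix_(i, j) hessian ip g (P th) (partial_param P th i) (partial_param P th j).

Definition is_pinv (A B : 'M[R]_p) : Prop := A *m B *m A = A.

End Defs.

(* Let d_i = D_i u_theta and let H be the Hessian form D^2E(u_theta).  By the
   chain rule the i-th component of the Euclidean gradient of L is <grad E(u_theta), d_i>,
   and in both parts this equals H(w, d_i) for a suitable w: in (i) w solves
   D^2E(u_theta) w = grad E(u_theta), which exists by the Lax-Milgram argument
   (a Banach fixed point of x |-> x + t (grad E(u_theta) - D^2E(u_theta) x)); in
   (ii) grad E(u) = a(u - u*, .) because grad E vanishes at the minimiser u*,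
   so w = u_theta - u*.
   The vector b = (H(w, d_i))_i is orthogonal to the kernel of the symmetric
   Gram matrix G, because G c = 0 forces sum_i c_i d_i = 0; hence b lies in the
   range of G and G G^+ b = b, which are exactly the normal equations saying
   that sum_i (G^+ b)_i d_i is the H-orthogonal projection of w onto
   span{d_i}.  Symmetry of H is Schwarz's theorem, obtained by applying the
   mean value theorem to the second difference
   E(u + h(v + w)) - E(u + hv) - E(u + hw) + E(u). *)

From HB Require Import structures.
From mathcomp Require Import all_boot all_order all_algebra.
From mathcomp Require Import all_classical all_reals all_analysis.
From mathcomp Require Import ring lra.
Import Order.TTheory GRing.Theory Num.Theory.
Import numFieldNormedType.Exports.
Local Open Scope classical_set_scope.
Local Open Scope ring_scope.
Set Implicit Arguments. Unset Strict Implicit. Unset Printing Implicit Defensive.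

Section Forms.
Context {R : realType} {X : normedModType R}.

Definition left_linear (H : X -> X -> R) :=
  forall (c : R) x y z, H (c *: x + y) z = c * H x z + H y z.

Definition anisotropic (H : X -> X -> R) := forall x, H x x = 0 -> x = 0.

Variables (H : X -> X -> R) (H_linl : left_linear H).

Lemma bform0l z : H 0 z = 0.
Proof.
have := H_linl 1 0 0 z; rewrite scaler0 addr0 mul1r => /eqP.
by rewrite -subr_eq subrr eq_sym => /eqP.
Qed.

Lemma bformZl c x z : H (c *: x) z = c * H x z.
Proof. by have := H_linl c x 0 z; rewrite !addr0 bform0l addr0. Qed.

Lemma bformDl x y z : H (x + y) z = H x z + H y z.
Proof. by have := H_linl 1 x y z; rewrite scale1r mul1r. Qed.

Lemma bformBl x y z : H (x - y) z = H x z - H y z.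
Proof. by rewrite bformDl -scaleN1r bformZl mulN1r. Qed.

Lemma bform_suml n (c : 'I_n -> R) (v : 'I_n -> X) z :
  H (\sum_i c i *: v i) z = \sum_i c i * H (v i) z.
Proof. by elim/big_rec2: _ => [|i s y _ <-]; [exact: bform0l | rewrite H_linl]. Qed.

Hypothesis H_sym : forall x y, H x y = H y x.

Lemma bform0r z : H z 0 = 0.
Proof. by rewrite H_sym bform0l. Qed.

Lemma bformZr c x z : H z (c *: x) = c * H z x.
Proof. by rewrite H_sym bformZl H_sym. Qed.

Lemma bformDr x y z : H z (x + y) = H z x + H z y.
Proof. by rewrite H_sym bformDl !(H_sym z). Qed.

Lemma bformBr x y z : H z (x - y) = H z x - H z y.
Proof. by rewrite H_sym bformBl !(H_sym z). Qed.

Lemma bform_sumr n (c : 'I_n -> R) (v : 'I_n -> X) z :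
  H z (\sum_i c i *: v i) = \sum_i c i * H z (v i).
Proof. by rewrite H_sym bform_suml; apply: eq_bigr => i _; rewrite H_sym. Qed.

End Forms.

Section InnerProduct.
Context {R : realType} {X : normedModType R} (ip : X -> X -> R)
  (hip : is_inner_product ip).

Lemma ip_linl : left_linear ip.
Proof. by case: hip. Qed.

Lemma ipC x y : ip x y = ip y x.
Proof. by case: hip. Qed.

Lemma ip_normE x : ip x x = `|x| ^+ 2.
Proof. by case: hip. Qed.

Lemma ip_norm_expand x y t :
  `|x - t *: y| ^+ 2 = `|x| ^+ 2 - 2 * t * ip y x + t ^+ 2 * `|y| ^+ 2.
Proof.
rewrite -!ip_normE (bformBl ip_linl) !(bformBr ip_linl ipC) (bformZl ip_linl).
by rewrite !(bformZr ip_linl ipC) (bformZl ip_linl) (ipC x y); ring.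
Qed.

Lemma normr_ip_le x y : `|ip x y| <= `|x| * `|y|.
Proof.
have [->|y_neq0] := eqVneq y 0.
  by rewrite (bform0r ip_linl ipC) !normr0 mulr0.
have y2_gt0 : 0 < `|y| ^+ 2 by rewrite exprn_gt0 // normr_gt0.
have := sqr_ge0 `| (`|y| ^+ 2) *: x - ip x y *: y|.
rewrite -(ip_normE (_ - _)) (bformBl ip_linl) !(bformBr ip_linl ipC) !(bformZl ip_linl).
rewrite !(bformZr ip_linl ipC) !ip_normE (ipC y x) => h.
have ip2_le : ip x y ^+ 2 <= (`|x| * `|y|) ^+ 2.
  by rewrite exprMn -(ler_pM2l y2_gt0); nra.
by rewrite -(ler_pXn2r (isT : (0 < 2)%N)) ?nnegrE ?mulr_ge0 // real_normK ?num_real.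
Qed.

Lemma ip_eq x y : (forall w, ip x w = ip y w) -> x = y.
Proof.
move=> e; apply/eqP; rewrite -subr_eq0 -normr_eq0 -sqrf_eq0 -ip_normE.
by rewrite (bformBl ip_linl) e subrr.
Qed.

End InnerProduct.

Section GramProjection.
Context {R : realType} {X : normedModType R} {p : nat}.
Variables (H : X -> X -> R) (H_linl : left_linear H)
  (H_sym : forall x y, H x y = H y x) (H_aniso : anisotropic H).
Variable d : 'I_p -> X.

Definition lincomb (c : 'cV[R]_p) : X := \sum_i c i 0 *: d i.

Definition gram_mx : 'M[R]_p := \matrix_(i, j) H (d i) (d j).

Lemma tr_gram_mx : gram_mx^T = gram_mx.
Proof. by apply/matrixP => i j; rewrite !mxE H_sym. Qed.

Lemma col_form_lincomb c : \col_j H (lincomb c) (d j) = gram_mx *m c.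
Proof.
apply/matrixP => j k; rewrite ord1 !mxE (bform_suml H_linl).
by apply: eq_bigr => i _; rewrite mxE mulrC H_sym.
Qed.

Lemma gram_mx_ker c : gram_mx *m c = 0 -> lincomb c = 0.
Proof.
move=> Gc0; apply: H_aniso; rewrite {1}/lincomb (bform_suml H_linl) big1 // => i _.
have := congr1 (fun v : 'cV_p => v i 0) (col_form_lincomb c).
by rewrite Gc0 !mxE H_sym => ->; rewrite mulr0.
Qed.

Lemma col_form_in_gram_range w : exists D, \col_j H w (d j) = gram_mx *m D.
Proof.
set b := \col_j H w (d j).
suff /submxP [D eD] : (b^T <= gram_mx)%MS.
  by exists D^T; rewrite -tr_gram_mx -trmx_mul -eD trmxK.
rewrite submxE; apply/eqP/matrixP => i k; rewrite ord1 !mxE.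
have Gcol0 : gram_mx *m col k (cokermx gram_mx) = 0.
  by rewrite colE mulmxA mulmx_coker mul0mx.
have := congr1 (H w) (gram_mx_ker Gcol0).
rewrite /lincomb (bform_sumr H_linl H_sym) (bform0r H_linl H_sym) => e.
by rewrite -[RHS]e; apply: eq_bigr => j _; rewrite !mxE mulrC.
Qed.

Lemma pinv_gram_projection (Gp : 'M[R]_p) w :
  is_pinv gram_mx Gp ->
  is_projection H [set x | exists c, x = lincomb c] w
    (lincomb (Gp *m \col_j H w (d j))).
Proof.
move=> GGpG; split; first by eexists.
move=> _ [c ->]; rewrite !(bform_sumr H_linl H_sym); apply: eq_bigr => j _.
congr (_ * _); have [D eD] := col_form_in_gram_range w.
have := congr1 (fun v : 'cV_p => v j 0) (col_form_lincomb (Gp *m \col_j H w (d j))).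
by rewrite mxE => ->; rewrite eD !mulmxA GGpG -eD mxE.
Qed.

End GramProjection.

Section Parametrization.
Context {R : realType} {X : normedModType R} {p : nat}.

Lemma diff_param_lincomb (P : 'cV[R]_p -> X) th c :
  'd P th c = lincomb (partial_param P th) c.
Proof.
rewrite {1}(matrix_sum_delta c) linear_sum; apply: eq_bigr => i _.
by rewrite big_ord1 linearZ.
Qed.

Lemma euclid_grad_comp ip E gE (P : 'cV[R]_p -> X) th :
  is_gradient ip E gE -> differentiable P th ->
  euclid_grad (E \o P) th = \col_i ip (gE (P th)) (partial_param P th i).
Proof.
move=> hgrad dP; apply/matrixP => i j; rewrite !mxE.
by have [dE dEE] := hgrad (P th); rewrite diff_comp //= dEE.
Qed.

End Parametrization.

Section DifferenceQuotients.
Context {R : realType} {V W : normedModType R}.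

Lemma diff_quotient_lim (f : V -> W) u v (g : R -> W) (q : W) :
  differentiable f u ->
  (forall h : R, h != 0 -> h^-1 *: (f (h *: v + u) - f u) = g h) ->
  g @ 0^' --> q -> 'd f u v = q.
Proof.
move=> df eg cg; rewrite -deriveE // /derive; apply: cvg_lim => //.
apply: cvg_trans cg; apply: near_eq_cvg; near=> h.
by rewrite /= eg //; near: h; exact: nbhs_dnbhs_neq.
Unshelve. all: end_near. Qed.

Lemma diff_remainder_le (f : V -> W) u eps : differentiable f u -> 0 < eps ->
  exists2 d, 0 < d & forall z, `|z| < d ->
    `|f (u + z) - f u - 'd f u z| <= eps * `|z|.
Proof.
move=> df eps_gt0; have [_ /eqaddoP fo] := (diff_locallyP _ _).1 df.
have /nbhs_norm0P [d d_gt0 hd] := fo eps eps_gt0.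
exists d => // z /hd.
rewrite -[X in `|X| <= _ -> _]/(f (z + u) - (f u + 'd f u z)).
by rewrite (addrC z) opprD addrA.
Qed.

End DifferenceQuotients.

Section Gradient.
Context {R : realType} {X : normedModType R} (ip : X -> X -> R)
  (hip : is_inner_product ip) (E : X -> R) (gE : X -> X)
  (hgrad : is_gradient ip E gE).

Lemma is_derive_along x v (s : R) :
  is_derive s 1 (fun t : R => E (x + t *: v)) (ip (gE (x + s *: v)) v).
Proof.
set y := x + s *: v; have [dE dEE] := hgrad y.
have quotE : (fun h : R => h^-1 *: (E (x + (h *: 1 + s) *: v) - E y)) =
             (fun h : R => h^-1 *: (E (h *: v + y) - E y)).
  by apply/funext => h; rewrite [h *: 1]mulr1 scalerDl addrCA.
split; rewrite /derivable /derive /= quotE; first exact: diff_derivable.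
by rewrite -[lim _]/('D_v E y) deriveE.
Qed.

Lemma gradient_eq0_at_min ustar : (forall u, E ustar <= E u) -> gE ustar = 0.
Proof.
move=> hmin; apply: (ip_eq hip) => v; rewrite (bform0l (ip_linl hip)).
have := is_derive_along ustar v 0; rewrite scale0r addr0 => dE0.
have : is_derive (0 : R) 1 (fun t : R => E (ustar + t *: v)) 0.
  apply: (@derive1_at_min _ _ (-1) 1) => //.
  - by move=> t _; have [] := is_derive_along ustar v t.
  - by rewrite in_itv /= ltrN10 ltr01.
  - by move=> t _; rewrite scale0r addr0.
by move=> [_]; rewrite derive_val.
Qed.

End Gradient.

Section QuadraticEnergy.
Context {R : realType} {X : normedModType R} (ip : X -> X -> R)
  (hip : is_inner_product ip) (E : X -> R) (gE : X -> X)
  (hgrad : is_gradient ip E gE) (a : X -> X -> R) (a_bilin : is_bilin_form a)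
  (a_sym : symm_form a) (l : X -> R)
  (l_lin : forall (c : R) x y, l (c *: x + y) = c * l x + l y) (c0 : R)
  (hE : forall u, E u = a u u / 2 + l u + c0).

Let a_linl : left_linear a := a_bilin.1.
Let ip_lin : left_linear ip := ip_linl hip.

Lemma diff_quadratic u v : 'd E u v = a u v + l v.
Proof.
pose q h := (a u v + l v) + h * (a v v / 2).
apply: (@diff_quotient_lim _ _ _ _ _ _ q); first by have [] := hgrad u.
  move=> h h_neq0; rewrite !hE l_lin (bformDl a_linl) !(bformDr a_linl a_sym).
  rewrite (bformZl a_linl) !(bformZr a_linl a_sym) (bformZl a_linl) (a_sym v u).
  by rewrite /q [_ *: _]mulrC; field.
have q_cvg : q @ (0 : R) --> (a u v + l v) + 0 * (a v v / 2).
  exact: (cvgD (cvg_cst _) (cvgM cvg_id (cvg_cst _))).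
by rewrite mul0r addr0 in q_cvg; exact: cvg_within_filter.
Qed.

Variables (ustar : X) (hmin : forall u, E ustar <= E u).

Lemma ip_gradient_quadratic x v : ip (gE x) v = a (x - ustar) v.
Proof.
have ip_gE y : ip (gE y) v = a y v + l v by have [_ <-] := hgrad y; rewrite diff_quadratic.
have := ip_gE ustar; rewrite (gradient_eq0_at_min hip hgrad hmin) (bform0l ip_lin).
by rewrite ip_gE (bformBl a_linl); lra.
Qed.

Lemma hessian_quadratic u : differentiable gE u -> hessian ip gE u = a.
Proof.
move=> dgE; apply/funext => v; apply/funext => w; rewrite /hessian.
have -> : 'd gE u v = gE (v + u) - gE u.
  apply: (@diff_quotient_lim _ _ _ _ _ _ (fun=> gE (v + u) - gE u)) => //.
    move=> h h_neq0; apply: (ip_eq hip) => z.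
    rewrite (bformZl ip_lin) !(bformBl ip_lin) !ip_gradient_quadratic.
    by rewrite !(bformBl a_linl) !(bformDl a_linl) (bformZl a_linl); field.
  exact: cvg_cst.
rewrite (bformBl ip_lin) !ip_gradient_quadratic !(bformBl a_linl) (bformDl a_linl).
ring.
Qed.

End QuadraticEnergy.

Section LaxMilgram.
Context {R : realType} {X : completeNormedModType R} (ip : X -> X -> R)
  (hip : is_inner_product ip) (A : {linear X -> X}) (c : R) (c_gt0 : 0 < c)
  (A_coer : forall x, c * `|x| ^+ 2 <= ip (A x) x).

Lemma sqr_ratio_gt0_le1 M : c <= M -> 0 < (c / M) ^+ 2 <= 1.
Proof.
move=> cM; have M_gt0 : 0 < M := lt_le_trans c_gt0 cM.
rewrite exprn_gt0 ?divr_gt0 //=.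
by apply: exprn_ile1; [rewrite divr_ge0 // ltW | rewrite ler_pdivrMr // mul1r].
Qed.

(* With t = c / M^2 and k = (c / M)^2: |z - t A z|^2 <= (1 - k) |z|^2 <= (1 - k/2)^2 |z|^2. *)
Lemma coercive_step_contraction M z : c <= M -> (forall x, `|A x| <= M * `|x|) ->
  `|z - (c / M ^+ 2) *: A z| <= (1 - (c / M) ^+ 2 / 2) * `|z|.
Proof.
move=> cM A_bd; have M_gt0 : 0 < M := lt_le_trans c_gt0 cM.
have /andP[k_gt0 k_le1] := sqr_ratio_gt0_le1 cM.
set t := c / M ^+ 2; set k := (c / M) ^+ 2 in k_gt0 k_le1 *.
have ctk : t * (c * `|z| ^+ 2) = k * `|z| ^+ 2.
  by rewrite mulrA /t /k; congr (_ * _); field; rewrite gt_eqF.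
have t2Mk : t ^+ 2 * (M ^+ 2 * `|z| ^+ 2) = k * `|z| ^+ 2.
  by rewrite mulrA /t /k; congr (_ * _); field; rewrite gt_eqF.
have Az2 : `|A z| ^+ 2 <= M ^+ 2 * `|z| ^+ 2.
  by rewrite -exprMn (ler_pXn2r (isT : (0 < 2)%N)) ?nnegrE ?A_bd ?mulr_ge0 ?(ltW M_gt0).
have := ler_wpM2l (ltW (divr_gt0 c_gt0 (exprn_gt0 2 M_gt0))) (A_coer z).
have := ler_wpM2l (sqr_ge0 t) Az2; rewrite -/t ctk t2Mk => Az2t coer_t.
have sq_le : `|z - t *: A z| ^+ 2 <= (1 - k / 2) ^+ 2 * `|z| ^+ 2.
  have := mulr_ge0 (mulr_ge0 (ltW k_gt0) (ltW k_gt0)) (sqr_ge0 `|z|).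
  rewrite (ip_norm_expand hip); lra.
have rhs_ge0 : 0 <= (1 - k / 2) * `|z| by rewrite mulr_ge0 //; lra.
by rewrite -(ler_pXn2r (isT : (0 < 2)%N)) ?nnegrE // exprMn.
Qed.

Lemma coercive_linear_surj : continuous A -> forall f, exists w, A w = f.
Proof.
move=> A_cont f.
have [M cM A_bd] : exists2 M, c <= M & forall x, `|A x| <= M * `|x|.
  have := continuous_linear_bounded 0 (A_cont 0).
  move=> /(linear_boundedP A).1/pinfty_ex_gt0 [r r_gt0 A_r].
  exists (r + c); first by rewrite lerDr ltW.
  by move=> x; apply: (le_trans (A_r x)); rewrite ler_wpM2r // lerDl ltW.
have /andP[k_gt0 k_le1] := sqr_ratio_gt0_le1 cM.
set t := c / M ^+ 2; set q := 1 - (c / M) ^+ 2 / 2.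
have t_gt0 : 0 < t by rewrite divr_gt0 // exprn_gt0 // (lt_le_trans c_gt0 cM).
have q_ge0 : 0 <= q by rewrite /q; lra.
pose T x := x + t *: (f - A x).
have T_contr : is_contraction (totalfun_ setT T : {fun [set: X] >-> [set: X]}).
  exists (NngNum q_ge0); split=> [|[x y] _ /=]; first by rewrite /= /q; lra.
  change (`|T x - T y| <= q * `|x - y|).
  rewrite /T opprD addrACA -scalerBr opprB (addrC (f - A x)) subrKA.
  rewrite -(opprB (A x)) -linearB scalerN.
  exact: coercive_step_contraction.
have [w _ wTw] := banach_fixed_point T_contr closedT (ex_intro _ 0 I).
exists w; have : w + 0 = T w by rewrite addr0.
by move/addrI/esym/eqP; rewrite scaler_eq0 (gt_eqF t_gt0) subr_eq0 => /eqP.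
Qed.

End LaxMilgram.

Section HessianSymmetry.
Context {R : realType} {X : normedModType R} (ip : X -> X -> R)
  (hip : is_inner_product ip) (E : X -> R) (gE : X -> X)
  (hgrad : is_gradient ip E gE).

Definition second_diff u (h : R) v w :=
  E (u + h *: (v + w)) - E (u + h *: v) - E (u + h *: w) + E u.

Lemma second_diffC u h v w : second_diff u h v w = second_diff u h w v.
Proof. by rewrite /second_diff (addrC v); ring. Qed.

Lemma second_diff_mvt u v w h : 0 < h ->
  exists2 s, 0 < s < h & second_diff u h v w =
    h * (ip (gE (u + h *: w + s *: v)) v - ip (gE (u + s *: v)) v).
Proof.
move=> h_gt0; pose g s := E (u + h *: w + s *: v) - E (u + s *: v).
pose dg s := ip (gE (u + h *: w + s *: v)) v - ip (gE (u + s *: v)) v.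
have g_der (s : R) : is_derive s 1 g (dg s).
  exact: is_deriveB (is_derive_along hgrad _ _ _) (is_derive_along hgrad _ _ _).
have g_cont : {within `[0, h], continuous g}.
  by apply: derivable_within_continuous => s _; have [] := g_der s.
have [s s_in g_eq] := MVT h_gt0 (fun s _ => g_der s) g_cont.
rewrite in_itv /= in s_in; rewrite subr0 in g_eq.
exists s => //; rewrite mulrC -g_eq /g /second_diff !scale0r !addr0.
by rewrite scalerDr addrA (addrAC u); ring.
Qed.

Variables (u : X) (dgE : differentiable gE u).

Lemma second_diff_approx eps d v w h :
  0 <= eps -> (forall z, `|z| < d -> `|gE (u + z) - gE u - 'd gE u z| <= eps * `|z|) ->
  0 < h -> h * (`|v| + `|w|) < d ->
  `|second_diff u h v w - h ^+ 2 * ip ('d gE u w) v|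
    <= 2 * eps * h ^+ 2 * (`|v| + `|w|) ^+ 2.
Proof.
move=> eps_ge0 rem_le h_gt0 hSd; set S := `|v| + `|w|; set A := 'd gE u.
have S_ge0 : 0 <= S by rewrite addr_ge0.
pose rem z := gE (u + z) - gE u - A z.
have rem_ip z : `|z| <= h * S -> `|ip (rem z) v| <= eps * h * S ^+ 2.
  move=> zS; apply: le_trans (normr_ip_le hip _ _) _.
  have := rem_le z (le_lt_trans zS hSd); rewrite -/(rem z) => remz.
  apply: le_trans (ler_wpM2r (normr_ge0 v) remz) _.
  rewrite expr2 mulrA; apply: ler_pM; rewrite ?mulr_ge0 ?lerDl //.
  by rewrite -mulrA ler_wpM2l.
have [s /andP[s_gt0 s_lth] ->] := second_diff_mvt u v w h_gt0.
have -> : ip (gE (u + h *: w + s *: v)) v - ip (gE (u + s *: v)) v =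
    ip (rem (h *: w + s *: v)) v - ip (rem (s *: v)) v + h * ip (A w) v.
  rewrite -addrA /rem linearD linearZ !(bformBl (ip_linl hip)).
  by rewrite !(bformDl (ip_linl hip)) (bformZl (ip_linl hip)); ring.
have hs_norm : `|h *: w + s *: v| <= h * S.
  apply: le_trans (ler_normD _ _) _; rewrite !normrZ !gtr0_norm //.
  have := normr_ge0 v; rewrite /S; nra.
have s_norm : `|s *: v| <= h * S.
  rewrite normrZ gtr0_norm //; have := normr_ge0 v; have := normr_ge0 w; rewrite /S; nra.
have := rem_ip _ hs_norm; have := rem_ip _ s_norm.
set r1 := ip (rem (h *: w + s *: v)) v; set r2 := ip (rem (s *: v)) v => r2_le r1_le.
have -> : h * (r1 - r2 + h * ip (A w) v) - h ^+ 2 * ip (A w) v = h * (r1 - r2) by ring.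
have r12_le : `|r1 - r2| <= 2 * (eps * h * S ^+ 2).
  by have := ler_normB r1 r2; lra.
rewrite normrM gtr0_norm //; nra.
Qed.

Lemma hessian_sym v w : hessian ip gE u v w = hessian ip gE u w v.
Proof.
rewrite /hessian; set S := `|v| + `|w|.
have S_ge0 : 0 <= S by rewrite addr_ge0.
apply/eqP; rewrite -subr_eq0 -normr_le0; apply/ler_addgt0Pr => e e_gt0.
set eps := e / (4 * S ^+ 2 + 1).
have K_gt0 : 0 < 4 * S ^+ 2 + 1 by rewrite ltr_wpDl ?mulr_ge0 ?sqr_ge0.
have eps_gt0 : 0 < eps by rewrite divr_gt0.
have [d d_gt0 rem_le] := diff_remainder_le dgE eps_gt0.
pose h := d / (2 * (S + 1)).
have h_gt0 : 0 < h by rewrite divr_gt0 // mulr_gt0 // ltr_wpDl.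
have hSd : h * S < d.
  by rewrite /h mulrAC ltr_pdivrMr ?mulr_gt0 ?ltr_wpDl //; nra.
have := second_diff_approx (ltW eps_gt0) rem_le h_gt0 hSd.
have hSd' : h * (`|w| + `|v|) < d by rewrite addrC.
have := second_diff_approx (ltW eps_gt0) rem_le h_gt0 hSd'.
rewrite second_diffC (addrC `|w|) -/S.
set D := second_diff u h v w => Dv Dw.
have h2_gt0 : 0 < h ^+ 2 by rewrite exprn_gt0.
have := ler_normB (D - h ^+ 2 * ip ('d gE u v) w) (D - h ^+ 2 * ip ('d gE u w) v).
rewrite opprB addrC addrA subrK -mulrBr normrM gtr0_norm // add0r => diff_le.
have epsK : eps * (4 * S ^+ 2 + 1) = e by rewrite /eps divfK // gt_eqF.
rewrite distrC -(ler_pM2l h2_gt0) -epsK.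
have := mulr_gt0 eps_gt0 h2_gt0; lra.
Qed.

End HessianSymmetry.

Section NaturalGradient.
Context {R : realType} {X : normedModType R}.

Lemma coercive_anisotropic (H : X -> X -> R) : coercive_form H -> anisotropic H.
Proof.
move=> [c [c_gt0 H_coer]] x Hx0; apply/eqP; rewrite -normr_eq0 -sqrf_eq0.
by rewrite eq_le sqr_ge0 andbT -(pmulr_rle0 _ c_gt0) -Hx0.
Qed.

Lemma posdef_anisotropic (H : X -> X -> R) : posdef_form H -> anisotropic H.
Proof.
move=> H_pos x Hx0; have [//|x_neq0] := eqVneq x 0.
by have := H_pos x x_neq0; rewrite Hx0 ltxx.
Qed.

Lemma hessian_linl (ip : X -> X -> R) (gE : X -> X) u :
  is_inner_product ip -> left_linear (hessian ip gE u).
Proof. by move=> hip c x y z; rewrite /hessian linearP (ip_linl hip). Qed.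

Lemma natural_gradient_projection ip E gE {p} (P : 'cV[R]_p -> X) th
    (H : X -> X -> R) w Gp :
  is_gradient ip E gE -> differentiable P th ->
  left_linear H -> (forall x y, H x y = H y x) -> anisotropic H ->
  (forall v, ip (gE (P th)) v = H w v) ->
  is_pinv (gram_mx H (partial_param P th)) Gp ->
  is_projection H (tangent_space P th) w ('d P th (Gp *m euclid_grad (E \o P) th)).
Proof.
move=> hgrad dP H_linl H_sym H_aniso gE_H GGp.
rewrite diff_param_lincomb (euclid_grad_comp hgrad dP).
have -> : \col_i ip (gE (P th)) (partial_param P th i) = \col_i H w (partial_param P th i).
  by apply/matrixP => i j; rewrite !mxE gE_H.
exact: pinv_gram_projection.
Qed.

End NaturalGradient.

Unset Implicit Arguments.

Theorem theorem1 (R : realType) (X : completeNormedModType R)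
    (ip : X -> X -> R) (hip : is_inner_product ip)
    (E : X -> R) (gE : X -> X) (hgrad : is_gradient ip E gE)
    (h2 : forall u, differentiable gE u) (hconv : convex_fun E)
    (p : nat) (P : 'cV[R]_p -> X) (hP : forall th, differentiable P th)
    (th : 'cV[R]_p) (Gp : 'M[R]_p)
    (hGp : is_pinv (energy_gram ip gE P th) Gp) :
  ((forall u, coercive_form (hessian ip gE u)) ->
     exists w : X, 'd gE (P th) w = gE (P th) /\
       is_projection (hessian ip gE (P th)) (tangent_space P th) w
         ('d P th (Gp *m euclid_grad (E \o P) th)))
  /\
  (forall (a : X -> X -> R) (ustar : X),
     is_bilin_form a -> symm_form a -> bounded_form a -> posdef_form a ->
     quadratic_with E a ->
     (forall u, E ustar <= E u) ->
     is_projection a (tangent_space P th) (P th - ustar)%R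
       ('d P th (Gp *m euclid_grad (E \o P) th))).
Proof.
split=> [coer | a ustar a_bilin a_sym _ a_pos [l [c0 [l_lin _ hE]]] hmin].
  have [c [c_gt0 c_coer]] := coer (P th).
  have [w dgE_w] := coercive_linear_surj hip c_gt0 c_coer
    (diff_continuous (h2 (P th))) (gE (P th)).
  exists w; split => //.
  apply: natural_gradient_projection hGp => //.
  - exact: hessian_linl.
  - exact: hessian_sym.
  - exact: coercive_anisotropic.
  - by move=> v; rewrite /hessian dgE_w.
have hess_a := hessian_quadratic hip hgrad a_bilin a_sym l_lin hE hmin (h2 (P th)).
rewrite /energy_gram hess_a in hGp.
apply: natural_gradient_projection hGp => //.
- exact: a_bilin.1.
- exact: posdef_anisotropic.
- exact: (ip_gradient_quadratic hip hgrad a_bilin a_sym l_lin hE hmin).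
Qed.
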